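(* Let $\Psi=\{\psi_i\}_{i\in I}$ be an exact lower frame sequence in a separable Hilbert space $\mathcal{H}$. Then $\Psi$ has a unique biorthogonal sequence, and $\Psi$ is minimal.
   Context: $I$ is countable. $\Psi$ is a lower frame sequence if there is $A>0$ with $A\|f\|^2\le\sum_i|\langle f,\psi_i\rangle|^2$ for all $f\in\mathcal{H}$ with $\{\langle f,\psi_i\rangle\}_i\in\ell^2$. $\Psi$ is exact if for every $k\in I$, $\overline{\mathrm{span}}\{\psi_i\}_{i\in I}\ne\overline{\mathrm{span}}\{\psi_i\}_{i\ne k}$. $\Psi$ is minimal if $\psi_j\notin\overline{\mathrm{span}}\{\psi_i\}_{i\ne j}$ for all $j$. A sequence $\{\varphi_i\}_{i\in I}$ is biorthogonal to $\Psi$ if $\langle\psi_i,\varphi_j\rangle=\delta_{ij}$ for all $i,j$. *)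

From HB Require Import structures.
From mathcomp Require Import all_boot all_order all_algebra.
From mathcomp Require Import all_classical all_reals all_analysis.
From mathcomp Require Import complex.
Set Implicit Arguments. Unset Strict Implicit. Unset Printing Implicit Defensive.
Import Order.TTheory GRing.Theory Num.Theory.
Import numFieldNormedType.Exports.
Local Open Scope classical_set_scope.
Local Open Scope ring_scope.

Section HilbertDefs.
Variable R : realType.
Local Notation C := (R[i]).

Definition cabs2 (z : C) : R := (complex.Re z) ^+ 2 + (complex.Im z) ^+ 2.

Definition rnorm (H : normedModType C) (x : H) : R := complex.Re `|x|.

(** [ip] is an inner product on H (linear in the first argument,
    conjugate symmetric) inducing the norm of H: <x,x> = ||x||^2.
    Together with completeness of H this makes H a complex Hilbert space. *)
Record is_inner_product (H : normedModType C) (ip : H -> H -> C) : Prop := {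
  ip_linear : forall (a : C) (x y z : H), ip (a *: x + y) z = a * ip x z + ip y z;
  ip_conj_sym : forall x y : H, ip x y = (ip y x)^*;
  ip_norm : forall x : H, ip x x = `|x| ^+ 2 }.

Definition separable (T : topologicalType) : Prop :=
  exists D : set T, countable D /\ closure D = [set: T].

Definition span_of (H : normedModType C) (I : countType) (psi : I -> H)
    (J : set I) : set H :=
  [set x | exists (s : seq I) (c : I -> C),
      (forall i, i \in s -> J i) /\ x = \sum_(i <- s) c i *: psi i].

Definition cspan (H : normedModType C) (I : countType) (psi : I -> H)
    (J : set I) : set H := closure (span_of psi J).

Definition lower_frame_sequence (H : normedModType C) (ip : H -> H -> C)
    (I : countType) (psi : I -> H) : Prop :=
  exists A : R, 0 < A /\
    forall f : H,
      (\esum_(i in [set: I]) ((cabs2 (ip f (psi i)))%:E) < +oo)%E ->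
      ((A * rnorm f ^+ 2)%:E <= \esum_(i in [set: I]) ((cabs2 (ip f (psi i)))%:E))%E.

Definition exact_seq (H : normedModType C) (I : countType) (psi : I -> H) : Prop :=
  forall k : I, cspan psi [set: I] <> cspan psi [set i | i <> k].

Definition minimal_seq (H : normedModType C) (I : countType) (psi : I -> H) : Prop :=
  forall j : I, ~ cspan psi [set i | i <> j] (psi j).

Definition biorthogonal (H : normedModType C) (ip : H -> H -> C)
    (I : countType) (psi phi : I -> H) : Prop :=
  forall i j : I, ip (psi i) (phi j) = (i == j)%:R.

End HilbertDefs.

From HB Require Import structures.
From mathcomp Require Import all_boot all_order all_algebra.
From mathcomp Require Import all_classical all_reals all_analysis.
From mathcomp Require Import complex ring lra.
Import Order.TTheory GRing.Theory Num.Theory.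
Import numFieldNormedType.Exports.
Local Open Scope classical_set_scope.
Local Open Scope complex_scope.
Local Open Scope ring_scope.

(* Exactness forces minimality: if psi_j lay in the closed span K_j of the
   other vectors, then K_j would contain every psi_i and hence the closed span
   of the whole family.  By minimality psi_j is not in the closed subspace K_j;
   as in the projection theorem, a minimizing sequence for the distance from
   psi_j to K_j is Cauchy by the parallelogram law, its limit is a nearest
   point, and psi_j minus that point is orthogonal to K_j but not to psi_j.
   Normalized, it is phi_j.  A vector orthogonal to every psi_i has frame sum
   0, so the lower frame bound forces it to vanish; this gives uniqueness. *)

Section Complex.
Context {R : realType}.

Lemma ge0_complex_real (z : R[i]) : 0 <= z -> z = (complex.Re z)%:C.
Proof. by case: z => a b; rewrite lecE /= => /andP [/eqP -> _]. Qed.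

Lemma cabs2_ge0 (z : R[i]) : 0 <= cabs2 z.
Proof. by rewrite addr_ge0 // sqr_ge0. Qed.

Lemma cabs2_eq0 (z : R[i]) : cabs2 z = 0 -> z = 0.
Proof.
case: z => a b /eqP; rewrite /cabs2 /= paddr_eq0 ?sqr_ge0 // !sqrf_eq0.
by case/andP => /eqP -> /eqP ->.
Qed.

Lemma mul_conj_cabs2 (z : R[i]) : z * z^* = (cabs2 z)%:C.
Proof.
case: z => a b; rewrite /cabs2 /=; apply/eqP; rewrite eq_complex /=.
by apply/andP; split; apply/eqP; ring.
Qed.

End Complex.

Section Norm.
Context {R : realType} {H : normedModType R[i]}.

Lemma norm_rnorm (x : H) : `|x| = (rnorm x)%:C.
Proof. exact: ge0_complex_real. Qed.

Lemma rnorm_ge0 (x : H) : 0 <= rnorm x.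
Proof. by rewrite -lecR rmorph0 -norm_rnorm. Qed.

Lemma rnormD (x y : H) : rnorm (x + y) <= rnorm x + rnorm y.
Proof. by rewrite -lecR rmorphD /= -!norm_rnorm ler_normD. Qed.

Lemma rnormB (x y : H) : rnorm (x - y) = rnorm (y - x).
Proof. by rewrite /rnorm distrC. Qed.

Lemma rnorm_eq0 (x : H) : rnorm x = 0 -> x = 0.
Proof. by move=> x0; apply/normr0_eq0; rewrite norm_rnorm x0. Qed.

Lemma rnorm_scale2 (x : H) : rnorm (2 *: x) = 2 * rnorm x.
Proof. by apply: complexI; rewrite rmorphM /= rmorph_nat -!norm_rnorm normrZ normr_nat. Qed.

Lemma ball_rnorm (x y : H) (e : R[i]) : 0 < e -> ball x e y <-> rnorm (x - y) < complex.Re e.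
Proof.
move=> e0; rewrite -ball_normE /ball_ /= norm_rnorm {1}(ge0_complex_real _ (ltW e0)).
by rewrite ltcR.
Qed.

Lemma cvg_rnorm (T : Type) (F : set_system T) (FF : Filter F) (f : T -> H) (l : H) :
  f @ F --> l -> forall e, 0 < e -> \forall t \near F, rnorm (l - f t) < e.
Proof.
move=> fl e e0; have : 0 < e%:C by rewrite ltcR.
by move=> /((cvgrPdist_lt _ _).1 fl); apply: filterS => t; rewrite norm_rnorm ltcR.
Qed.

End Norm.

Section InnerProduct.
Context {R : realType} {H : normedModType R[i]} {ip : H -> H -> R[i]}.
Hypothesis hip : is_inner_product ip.

Lemma ipDl x y z : ip (x + y) z = ip x z + ip y z.
Proof. by have := ip_linear hip 1 x y z; rewrite scale1r mul1r. Qed.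

Lemma ip0l z : ip 0 z = 0.
Proof. by apply: (addrI (ip 0 z)); rewrite addr0 -ipDl addr0. Qed.

Lemma ipZl a x z : ip (a *: x) z = a * ip x z.
Proof. by have := ip_linear hip a x 0 z; rewrite !addr0 ip0l addr0. Qed.

Lemma ipBl x y z : ip (x - y) z = ip x z - ip y z.
Proof. by rewrite ipDl -scaleN1r ipZl mulN1r. Qed.

Lemma ipDr x y z : ip z (x + y) = ip z x + ip z y.
Proof. by rewrite (ip_conj_sym hip) ipDl rmorphD /= -!(ip_conj_sym hip). Qed.

Lemma ipZr a x z : ip z (a *: x) = a^* * ip z x.
Proof. by rewrite (ip_conj_sym hip) ipZl rmorphM /= -(ip_conj_sym hip). Qed.

Lemma ipBr x y z : ip z (x - y) = ip z x - ip z y.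
Proof. by rewrite (ip_conj_sym hip) ipBl rmorphB /= -!(ip_conj_sym hip). Qed.

Lemma ip_rnorm (x : H) : ip x x = (rnorm x)%:C ^+ 2.
Proof. by rewrite (ip_norm hip) norm_rnorm. Qed.

Lemma parallelogram (x y : H) :
  rnorm (x + y) ^+ 2 + rnorm (x - y) ^+ 2 = 2 * rnorm x ^+ 2 + 2 * rnorm y ^+ 2.
Proof.
apply: complexI; rewrite !(rmorphD, rmorphXn, rmorphM) /= -!ip_rnorm.
by rewrite !ipBl !ipDl !ipBr !ipDr; ring.
Qed.

Lemma rnorm_sub_scale_ip (f u : H) (s : R) :
  rnorm (f - (s%:C * ip f u) *: u) ^+ 2
  = rnorm f ^+ 2 - (2 * s - s ^+ 2 * rnorm u ^+ 2) * cabs2 (ip f u).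
Proof.
apply: complexI; rewrite !(rmorphB, rmorphXn, rmorphM) /= -!ip_rnorm.
have sC : (s%:C)^* = s%:C := conjc_real s.
rewrite -mul_conj_cabs2 !ipBl !ipBr !ipZl !ipZr rmorphM /= sC.
by rewrite [ip u f](ip_conj_sym hip); ring.
Qed.

Lemma ip_eq0_of_norm_min (f u : H) :
  (forall t : R[i], rnorm f <= rnorm (f - t *: u)) -> ip f u = 0.
Proof.
(* With t = s <f,u> for real s, minimality reads
   (2 s - s^2 ||u||^2) |<f,u>|^2 <= 0, and the factor is positive for this s. *)
move=> fmin; pose q := rnorm u ^+ 2; pose s := (q + 1)^-1.
have q0 : 0 <= q by rewrite sqr_ge0.
have s0 : 0 < s by rewrite invr_gt0; lra.
have sq : s * q < 1 by rewrite /s mulrC ltr_pdivrMr; lra.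
have := fmin (s%:C * ip f u); rewrite -(ler_pXn2r (_ : 0 < 2)%N) ?nnegrE ?rnorm_ge0 //.
rewrite rnorm_sub_scale_ip -/q => ineq; apply: cabs2_eq0.
have k0 : 0 < 2 * s - s ^+ 2 * q by rewrite expr2 -mulrA; nra.
have := cabs2_ge0 (ip f u); move: (cabs2 _) ineq => c ineq c0; nra.
Qed.

End InnerProduct.

Definition is_subspace {K : pzRingType} {V : lmodType K} (S : set V) : Prop :=
  S 0 /\ forall a x y, S x -> S y -> S (a *: x + y).

Section Span.
Context {R : realType} {H : normedModType R[i]} {I : countType} (psi : I -> H).
Implicit Type J : set I.

Lemma span0 J : span_of psi J 0.
Proof. by exists [::], (fun _ => 0); rewrite big_nil. Qed.

Lemma span_cons J a b x : J a -> span_of psi J x -> span_of psi J (b *: psi a + x).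
Proof.
move=> Ja [s [c [sJ ->]]].
exists (a :: [seq i <- s | i != a]),
  (fun i => if i == a then c a *+ count_mem a s + b else c i); split.
  by move=> i; rewrite inE mem_filter => /orP [/eqP -> | /andP [_ /sJ]].
rewrite big_cons eqxx big_filter (bigID (pred1 a)) /=.
have -> : \sum_(i <- s | i == a) c i *: psi i = (c a *: psi a) *+ count_mem a s.
  rewrite (eq_bigr (fun _ => c a *: psi a)) => [|i /eqP -> //].
  by rewrite big_const_seq iter_addr addr0.
under [X in _ = _ + X]eq_bigr => i /negbTE -> do [].
by rewrite scalerDl scalerMnl addrA [b *: psi a + _]addrC.
Qed.

Lemma span_subspace J : is_subspace (span_of psi J).
Proof.
split=> [|a x y [s [c [sJ ->]]] Sy]; first exact: span0.
rewrite scaler_sumr; elim: s sJ => [|i s IH] sJ; first by rewrite big_nil add0r.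
rewrite big_cons scalerA -addrA; apply: span_cons; first by apply: sJ; rewrite inE eqxx.
by apply: IH => k ks; apply: sJ; rewrite inE ks orbT.
Qed.

Lemma span_sub J (S : set H) :
  is_subspace S -> (forall i, J i -> S (psi i)) -> span_of psi J `<=` S.
Proof.
move=> [S0 Scomb] SJ _ [s [c [sJ ->]]]; elim: s sJ => [|i s IH] sJ; first by rewrite big_nil.
rewrite big_cons; apply: Scomb; first by apply: SJ; apply: sJ; rewrite inE eqxx.
by apply: IH => k ks; apply: sJ; rewrite inE ks orbT.
Qed.

Lemma span_psi J i : J i -> span_of psi J (psi i).
Proof.
by move=> Ji; rewrite -[psi i]addr0 -[psi i]scale1r; apply: span_cons => //; apply: span0.
Qed.

End Span.

Lemma closure_sub_preimage {T U : topologicalType} (f : T -> U) {A : set T} {B : set U} :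
  continuous f -> closed B -> A `<=` f @^-1` B -> closure A `<=` f @^-1` B.
Proof.
move=> fcont Bclosed AfB.
have -> : f @^-1` B = closure (f @^-1` B) by apply/closure_id; exact: preimage_closed.
exact: closureS.
Qed.

Lemma subspace_closure {K : numFieldType} {V : normedModType K} {S : set V} :
  is_subspace S -> is_subspace (closure S).
Proof.
move=> [S0 Scomb]; split=> [|a x y]; first exact: subset_closure.
have combl x' y' : closure S x' -> S y' -> closure S (a *: x' + y').
  move=> Sx' Sy'.
  apply: (closure_sub_preimage (B := closure S) (fun z => a *: z + y') _ _ _ _ Sx').
  - by move=> z; apply: cvgD; [exact: scaler_continuous | exact: cvg_cst].
  - exact: closed_closure.
  - by move=> z Sz; apply/subset_closure/Scomb.
move=> Sx; apply: (closure_sub_preimage (B := closure S) (fun z => a *: x + z)).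
- by move=> z; apply: cvgD; [exact: cvg_cst | exact: cvg_id].
- exact: closed_closure.
- by move=> z Sz; apply: combl.
Qed.

Section NearestPoint.
Context {R : realType} {H : completeNormedModType R[i]} {ip : H -> H -> R[i]}.
Hypothesis hip : is_inner_product ip.
Variables (K : set H) (p : H).
Hypotheses (Kclosed : closed K) (Kne : K !=set0).
Hypothesis Kmid : forall x y, K x -> K y -> K (2^-1 *: (x + y)).

Let dists := [set rnorm (p - w) | w in K].
Let dist := inf dists.

Let dists_has_inf : has_inf dists.
Proof.
have [w Kw] := Kne; split; first by exists (rnorm (p - w)), w.
by exists 0 => _ [x _ <-]; apply: rnorm_ge0.
Qed.

Let dist_le w : K w -> dist <= rnorm (p - w).
Proof. by move=> Kw; apply: ge_inf; [exact: dists_has_inf.2 | exists w]. Qed.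

Let dist_ge0 : 0 <= dist.
Proof.
by apply: lb_le_inf; [exact: dists_has_inf.1 | move=> _ [x _ <-]; apply: rnorm_ge0].
Qed.

Let minimizing (m : nat -> H) := forall n, K (m n) /\ rnorm (p - m n) < dist + n.+1%:R^-1.

Let minimizing_exists : exists m, minimizing m.
Proof.
suff [m mmin] : {m : nat -> H & minimizing m} by exists m.
apply: (@choice _ _ (fun n x => K x /\ rnorm (p - x) < dist + n.+1%:R^-1)) => n.
have en : 0 < n.+1%:R^-1 :> R by rewrite invr_gt0.
by have [_ [x Kx <-]] := inf_adherent en dists_has_inf; exists x.
Qed.

Let minimizing_dist m : minimizing m -> forall n k,
  rnorm (m n - m k) ^+ 2 <= 2 * (2 * dist + 1) * (n.+1%:R^-1 + k.+1%:R^-1).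
Proof.
move=> mmin n k; have [Kn dn] := mmin n; have [Kk dk] := mmin k.
have Dn := dist_le _ Kn; have Dk := dist_le _ Kk; have Dmid := dist_le _ (Kmid _ _ Kn Kk).
have par := parallelogram hip (p - m n) (p - m k).
have sum_eq : p - m n + (p - m k) = 2 *: (p - 2^-1 *: (m n + m k)).
  by rewrite scalerBr scalerA divff ?pnatr_eq0 // scale1r scaler_nat mulr2n opprD addrACA.
have diff_eq : p - m n - (p - m k) = m k - m n by rewrite opprB addrC addrA subrK.
rewrite sum_eq diff_eq rnorm_scale2 [rnorm (m k - _)]rnormB in par.
have D0 := dist_ge0.
have en0 : 0 < n.+1%:R^-1 :> R by rewrite invr_gt0.
have ek0 : 0 < k.+1%:R^-1 :> R by rewrite invr_gt0.
have en1 : n.+1%:R^-1 <= 1 :> R by rewrite invf_le1 ?ltr0n // ler1n.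
have ek1 : k.+1%:R^-1 <= 1 :> R by rewrite invf_le1 ?ltr0n // ler1n.
set a := rnorm (p - m n) in dn Dn par; set b := rnorm (p - m k) in dk Dk par.
set c := rnorm (p - _) in Dmid par; set en := n.+1%:R^-1 in dn en0 en1 *.
set ek := k.+1%:R^-1 in dk ek0 ek1 *.
have a2 : a ^+ 2 <= (dist + en) ^+ 2 by rewrite ler_pXn2r // ?nnegrE; lra.
have b2 : b ^+ 2 <= (dist + ek) ^+ 2 by rewrite ler_pXn2r // ?nnegrE; lra.
have c2 : dist ^+ 2 <= c ^+ 2 by rewrite ler_pXn2r // ?nnegrE; lra.
nra.
Qed.

Let minimizing_cvg m : minimizing m -> cvg (m @ \oo).
Proof.
move=> mmin; apply: cauchy_cvg; apply: cauchy_exP => eps eps0.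
have ep0 : 0 < complex.Re eps by rewrite -ltcR -ge0_complex_real ?ltW.
have C0 : 0 < 4 * (2 * dist + 1) by have := dist_ge0; lra.
have d0 : 0 < complex.Re eps ^+ 2 / (4 * (2 * dist + 1)) by rewrite divr_gt0 ?exprn_gt0.
have [N _ Nsmall] := near_infty_natSinv_lt (PosNum d0).
exists (m N), N => // n /= Nn; apply/ball_rnorm => //.
rewrite -(ltr_pXn2r (_ : 0 < 2)%N) ?nnegrE ?rnorm_ge0 ?ltW //.
apply: (le_lt_trans (minimizing_dist _ mmin N n)).
have := Nsmall N (leqnn N); have := Nsmall n Nn; rewrite /= !ltr_pdivlMr //.
move: (N.+1%:R^-1) (n.+1%:R^-1) (complex.Re eps ^+ 2) => eN en E; nra.
Qed.

Lemma exists_nearest : exists2 m0, K m0 & forall w, K w -> rnorm (p - m0) <= rnorm (p - w).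
Proof.
have [m mmin] := minimizing_exists.
have /cvg_ex [m0 mm0] := minimizing_cvg _ mmin.
exists m0.
  by apply: (closed_cvg K Kclosed _ m0 mm0); apply: nearW => n; exact: (mmin n).1.
move=> w Kw; apply: le_trans (dist_le _ Kw); apply/ler_addgt0Pr => e e0.
have e2 : 0 < e / 2 by rewrite divr_gt0.
near \oo => n.
have := rnormD (p - m n) (m n - m0); rewrite addrA subrK [rnorm (m n - m0)]rnormB.
have := (mmin n).2.
have : rnorm (m0 - m n) < e / 2 by near: n; exact: cvg_rnorm.
have : n.+1%:R^-1 < e / 2 by near: n; exact: near_infty_natSinv_lt (PosNum e2).
move: (n.+1%:R^-1) => en; lra.
Unshelve. all: by end_near.
Qed.

End NearestPoint.

Section DualVector.
Context {R : realType} {H : completeNormedModType R[i]} {ip : H -> H -> R[i]}.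
Hypothesis hip : is_inner_product ip.

Lemma nearest_orthogonal {K : set H} {p m0 : H} : is_subspace K -> K m0 ->
  (forall w, K w -> rnorm (p - m0) <= rnorm (p - w)) -> forall u, K u -> ip (p - m0) u = 0.
Proof.
move=> [_ Kcomb] Km0 m0near u Ku; apply: (ip_eq0_of_norm_min hip) => t.
by rewrite -addrA -opprD [m0 + _]addrC; apply: m0near; apply: Kcomb.
Qed.

Lemma exists_dual_vector (K : set H) p : closed K -> is_subspace K -> ~ K p ->
  exists f, (forall u, K u -> ip u f = 0) /\ ip p f = 1.
Proof.
move=> Kclosed Ksub Kp; have [K0 Kcomb] := Ksub.
have Kmid x y : K x -> K y -> K (2^-1 *: (x + y)).
  by move=> Kx Ky; rewrite scalerDr -[_ *: y]addr0; apply: (Kcomb) => //; apply: Kcomb.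
have [m0 Km0 m0near] := exists_nearest hip K p Kclosed (ex_intro _ 0 K0) Kmid.
have orth := nearest_orthogonal Ksub Km0 m0near.
have pf : ip p (p - m0) = ip (p - m0) (p - m0).
  by rewrite -{1}(subrK m0 p) (ipDl hip) (ip_conj_sym hip m0) orth // conjC0 addr0.
have pf0 : ip p (p - m0) != 0.
  rewrite pf (ip_norm hip) sqrf_eq0 normr_eq0 subr_eq0.
  by apply/eqP => pm0; apply: Kp; rewrite pm0.
exists ((ip p (p - m0))^-1^* *: (p - m0)); split.
  by move=> u Ku; rewrite (ipZr hip) (ip_conj_sym hip u) orth // conjC0 mulr0.
by rewrite (ipZr hip) conjCK mulVf.
Qed.

End DualVector.

Section Sequences.
Context {R : realType} {H : normedModType R[i]} {I : countType} {psi : I -> H}.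

Lemma exact_minimal : exact_seq psi -> minimal_seq psi.
Proof.
move=> psi_exact j psij; apply: (psi_exact j); rewrite /cspan; apply/seteqP; split.
  rewrite [X in _ `<=` X](closure_id _).1; last exact: closed_closure.
  apply: closureS; apply: span_sub => [|i _]; first exact/subspace_closure/span_subspace.
  have [-> //|ij] := eqVneq i j.
  by apply/subset_closure/span_psi => /= /eqP; rewrite (negbTE ij).
by apply: closureS; apply: span_sub => [|i _]; [exact: span_subspace | exact: span_psi].
Qed.

Context {ip : H -> H -> R[i]}.

Lemma lower_frame_orthogonal_eq0 g : lower_frame_sequence ip psi ->
  (forall i, ip g (psi i) = 0) -> g = 0.
Proof.
move=> [A [A0 frame]] g_orth; apply: rnorm_eq0.
have sum0 : (\esum_(i in [set: I]) (cabs2 (ip g (psi i)))%:E = 0)%E.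
  by apply: esum1 => i _; rewrite g_orth /cabs2 /= expr0n addr0.
have := frame g; rewrite sum0 => /(_ (ltry 0)); rewrite lee_fin.
by rewrite pmulr_rle0 // => g2; apply/eqP; rewrite -sqrf_eq0 eq_le g2 sqr_ge0.
Qed.

Lemma biorthogonal_unique phi phi' : is_inner_product ip -> lower_frame_sequence ip psi ->
  biorthogonal ip psi phi -> biorthogonal ip psi phi' -> phi = phi'.
Proof.
move=> hip frame bphi bphi'; apply/funext => j; apply/eqP; rewrite -subr_eq0; apply/eqP.
apply: (lower_frame_orthogonal_eq0 _ frame) => i.
by rewrite (ip_conj_sym hip) (ipBr hip) bphi bphi' subrr conjC0.
Qed.

End Sequences.

Section Biorthogonal.
Context {R : realType} {H : completeNormedModType R[i]} {ip : H -> H -> R[i]}.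
Context {I : countType} {psi : I -> H}.
Hypothesis hip : is_inner_product ip.

Lemma minimal_biorthogonal : minimal_seq psi -> exists phi, biorthogonal ip psi phi.
Proof.
move=> psi_min.
have dual j : exists f,
    (forall u, cspan psi [set i | i <> j] u -> ip u f = 0) /\ ip (psi j) f = 1.
  apply: (exists_dual_vector hip) => //; first exact: closed_closure.
  exact/subspace_closure/span_subspace.
have [phi phi_dual] := choice dual; exists phi => i j.
have [-> | ij] := eqVneq i j; first exact: (phi_dual j).2.
by apply: (phi_dual j).1; apply/subset_closure/span_psi => /= /eqP; apply/negP.
Qed.

End Biorthogonal.

Theorem corollary6p16 (R : realType) (H : completeNormedModType (R[i]))
    (ip : H -> H -> R[i]) (I : countType) (psi : I -> H) :
  is_inner_product ip ->
  separable H ->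
  lower_frame_sequence ip psi ->
  exact_seq psi ->
  (exists! phi : I -> H, biorthogonal ip psi phi) /\ minimal_seq psi.
Proof.
move=> hip _ frame psi_exact; have psi_min := exact_minimal psi_exact.
split=> //; have [phi bphi] := minimal_biorthogonal hip psi_min.
by exists phi; split=> // phi'; apply: biorthogonal_unique.
Qed.
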